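(* Let $n\ge2$, $a_1,\dots,a_n>0$, and let $\mathbf{A}$ be the $n\times n$ matrix whose first column has all entries equal to $-a_n$, whose superdiagonal entries are $A_{i,i+1}=a_i$ for $i\in\{1,\dots,n-1\}$, and all of whose other entries are $0$: $$\mathbf{A}=\begin{pmatrix}-a_n&a_1&0&\cdots&0\\-a_n&0&a_2&\ddots&\vdots\\\vdots&\vdots&\ddots&\ddots&0\\-a_n&0&\cdots&0&a_{n-1}\\-a_n&0&\cdots&0&0\end{pmatrix}.$$ Then the spectral radius satisfies $\rho(\mathbf{A})\le\max\{a_1,\dots,a_n\}$.
   Context: The spectral radius $\rho(\mathbf{A})$ is the maximum modulus of the complex eigenvalues of $\mathbf{A}$. *)

From HB Require Import structures.
From mathcomp Require Import all_boot all_order all_algebra.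
Set Implicit Arguments. Unset Strict Implicit. Unset Printing Implicit Defensive.
Import Order.TTheory GRing.Theory Num.Theory.
Local Open Scope ring_scope.

(* The matrix A of the paper, with a : nat -> C, where a i (0 <= i < n)
   is the paper's a_{i+1}.  Indices are 0-based:
   column 0 has entries -a_n = -(a (n-1)); entry (i, i+1) is a_{i+1} = a i. *)
Definition matA (C : pzRingType) (n : nat) (a : nat -> C) : 'M[C]_n :=
  \matrix_(i < n, j < n)
    if (j : nat) == 0%N then - a n.-1
    else if (j : nat) == i.+1 then a i else 0.

Definition spectral_radius_le (C : numClosedFieldType) (n : nat)
  (M : 'M[C]_n) (r : C) : Prop :=
  forall lambda : C, eigenvalue M lambda -> `|lambda| <= r.

(* Let v be a left eigenvector, v A = lam v, and write f_i for its entries,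
   S = f_0 + ... + f_m their sum and M = max a_i.  Reading v A = lam v
   column by column gives  lam f_0 = - S a_m  and  lam f_(j+1) = f_j a_j.
   These relations yield the exact identity
       lam S = (M - a_m) S - sum_(j<m) (M - a_j) f_j - M f_m,
   whose coefficients M - a_i, M are all nonnegative.  Taking moduli and
   using |lam| |f_(j+1)| = a_j |f_j| and |lam| |f_0| = a_m |S| to absorb the
   right-hand side turns it into  |lam| (|S| + T) <= M (|S| + T), where
   T = sum |f_i| > 0 since v != 0; hence |lam| <= M. *)
From HB Require Import structures.
From mathcomp Require Import all_boot all_order all_algebra.
From mathcomp Require Import ring.
Import Order.TTheory GRing.Theory Num.Theory.
Set Implicit Arguments. Unset Strict Implicit.
Local Open Scope ring_scope.

Lemma le_bigmax_real (R : numDomainType) (I : eqType) (r : seq I) (x0 : R)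
    (F : I -> R) :
  x0 \is Num.real -> (forall i, F i \is Num.real) ->
  forall i, i \in r -> F i <= \big[Num.max/x0]_(j <- r) F j.
Proof.
move=> x0R FR i; elim: r => // j r IH.
rewrite in_cons big_cons comparable_le_max; last first.
  by apply: real_comparable => //; apply: bigmax_real.
by case/orP=> [/eqP->|/IH->]; rewrite ?lexx ?orbT.
Qed.

Lemma le_bigmax_ord (R : numDomainType) (n : nat) (F : 'I_n -> R) :
  (forall i, 0 <= F i) -> forall i, F i <= \big[Num.max/0]_(j < n) F j.
Proof.
move=> F_ge0 i; apply: le_bigmax_real; rewrite ?mem_index_enum //.
by move=> j; apply: ger0_real.
Qed.

Section ColumnsOfMatA.
Variables (R : pzRingType) (m : nat) (a : nat -> R) (x : 'rV[R]_m.+1).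

Lemma matA_col0 : (x *m matA m.+1 a) 0 ord0 = - (\sum_i x 0 i) * a m.
Proof.
rewrite !mxE mulNr -mulNr -sumrN mulr_suml; apply: eq_bigr => i _.
by rewrite /matA mxE /= mulrN mulNr.
Qed.

Lemma matA_col_lift (j : 'I_m) :
  (x *m matA m.+1 a) 0 (lift ord0 j) = x 0 (widen_ord (leqnSn m) j) * a j.
Proof.
rewrite !mxE (bigD1 (widen_ord (leqnSn m) j)) //= big1 ?addr0.
  by rewrite /matA mxE lift0 /= eqxx.
move=> i /eqP ne_ij; rewrite /matA mxE lift0 /=.
case: eqP => [[ij]|_]; last by rewrite mulr0.
by case: ne_ij; apply: val_inj; rewrite /= ij.
Qed.

End ColumnsOfMatA.

Section ShiftEigenBound.
Variables (C : numDomainType) (m : nat) (a : nat -> C) (M lam : C).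
Variable f : 'I_m.+1 -> C.
Hypothesis a_ge0 : forall i : 'I_m.+1, 0 <= a i.
Hypothesis a_le_M : forall i : 'I_m.+1, a i <= M.
Hypothesis eq_first : lam * f ord0 = - (\sum_i f i) * a m.
Hypothesis eq_shift :
  forall j : 'I_m, lam * f (lift ord0 j) = f (widen_ord (leqnSn m) j) * a j.

Local Notation w j := (widen_ord (leqnSn m) j).
Local Notation S := (\sum_i f i).
Local Notation T := (\sum_i `|f i|).

Lemma shift_sum_identity :
  lam * S = (M - a m) * S - \sum_(j < m) (M - a j) * f (w j) - M * f ord_max.
Proof.
have sum_shift : \sum_(j < m) (M - a j) * f (w j)
    = M * \sum_(j < m) f (w j) - lam * \sum_(j < m) f (lift ord0 j).
  rewrite !mulr_sumr -sumrB; apply: eq_bigr => j _.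
  by rewrite eq_shift mulrBl [a j * _]mulrC.
have amS : a m * S = - (lam * f ord0) by rewrite eq_first mulNr opprK mulrC.
rewrite sum_shift mulrBl amS {1}big_ord_recl big_ord_recr /=.
ring.
Qed.

Lemma norm_shift (j : 'I_m) :
  `|lam| * `|f (lift ord0 j)| = a j * `|f (w j)|.
Proof.
by rewrite -normrM eq_shift normrM (ger0_norm (a_ge0 (w j))) mulrC.
Qed.

Lemma shift_norm_bound : `|lam| * (`|S| + T) <= M * (`|S| + T).
Proof.
have M_ge0 : 0 <= M := le_trans (a_ge0 ord0) (a_le_M ord0).
have am_le : 0 <= M - a m by rewrite subr_ge0 (a_le_M ord_max).
have triangle : `|lam| * `|S| <= (M - a m) * `|S|
    + \sum_(j < m) (M - a j) * `|f (w j)| + M * `|f ord_max|.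
  rewrite -normrM shift_sum_identity.
  apply: le_trans (ler_normB _ _) _; apply: lerD; last first.
    by rewrite normrM ger0_norm.
  apply: le_trans (ler_normB _ _) _; apply: lerD.
    by rewrite normrM ger0_norm.
  apply: le_trans (ler_norm_sum _ _ _) _; apply: ler_sum => j _.
  by rewrite normrM ger0_norm // subr_ge0 (a_le_M (w j)).
have sum_shift : \sum_(j < m) (M - a j) * `|f (w j)|
    = M * \sum_(j < m) `|f (w j)| - `|lam| * \sum_(j < m) `|f (lift ord0 j)|.
  rewrite !mulr_sumr -sumrB; apply: eq_bigr => j _.
  by rewrite norm_shift mulrBl.
have amS : a m * `|S| = `|lam| * `|f ord0|.
  by rewrite -normrM eq_first normrM normrN (ger0_norm (a_ge0 ord_max)) mulrC.
rewrite sum_shift mulrBl amS in triangle.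
have T_first : T = `|f ord0| + \sum_(j < m) `|f (lift ord0 j)|.
  by rewrite big_ord_recl.
have T_last : T = \sum_(j < m) `|f (w j)| + `|f ord_max| by rewrite big_ord_recr.
rewrite -subr_ge0 {1}T_last T_first.
rewrite -subr_ge0 in triangle; apply: le_trans triangle _.
by rewrite le_eqVlt; apply/orP; left; apply/eqP; ring.
Qed.

(* A nonzero solution makes |S| + T positive, so it can be cancelled. *)
Lemma shift_eigen_modulus_le : (exists i, f i != 0) -> `|lam| <= M.
Proof.
case=> i fi_neq0.
have T_gt0 : 0 < T.
  by rewrite (bigD1 i) //= ltr_pwDl ?normr_gt0 ?sumr_ge0.
by have := shift_norm_bound; rewrite ler_pM2r // ltr_wpDl.
Qed.

End ShiftEigenBound.

(* An eigenvalue of A gives a nonzero left eigenvector whose entries solve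
   the column relations, with M = max a_i bounding every a_i. *)
Theorem mainTheorem11 (C : numClosedFieldType) (n : nat) (a : nat -> C)
  (hn : (2 <= n)%N) (ha : forall i : nat, (i < n)%N -> 0 < a i) :
  spectral_radius_le (matA n a) (\big[Num.max/0]_(i < n) a i).
Proof.
move=> lam /eigenvalueP [v eigen_v v_neq0].
case: n hn ha v eigen_v v_neq0 => [//|m] _ ha v eigen_v v_neq0.
have a_ge0 (i : 'I_m.+1) : 0 <= a i by apply/ltW/ha.
apply: (@shift_eigen_modulus_le _ m a _ _ (fun i => v 0 i)) => //.
- by move=> i; apply: (le_bigmax_ord (F := fun i : 'I_m.+1 => a i)).
- by rewrite -(matA_col0 a v) eigen_v mxE.
- by move=> j; rewrite -(matA_col_lift a v) eigen_v mxE.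
- apply/existsP; rewrite -negb_forall; apply: contra v_neq0 => /forallP v0.
  by apply/eqP/matrixP => i j; rewrite ord1 mxE; apply/eqP/v0.
Qed.
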